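(* Let $X$ be the real harmonizable multifractional stable process and $T>0$. There exist $\delta,C_1,C_2>0$ such that for all $t,s\in[0,T]$ with $|t-s|<\delta$, $$C_1|t-s|^{\hat H(t,s)}\le\|X(t)-X(s)\|_\alpha\le C_2|t-s|^{\check H(t,s)},$$ where $\hat H(t,s)=\min_{u\in[s\wedge t,s\vee t]}H(u)$ and $\check H(t,s)=\max_{u\in[s\wedge t,s\vee t]}H(u)$.
   Context: Fix $\alpha\in(1,2)$. $M$ is an independently scattered rotationally invariant complex S$\alpha$S random measure on $\mathbb R$ with Lebesgue control measure: for every Borel $A$ and $\theta\in\mathbb R$, $e^{i\theta}M(A)\overset{d}{=}M(A)$, $\mathbb E e^{iu\,\mathrm{Re} M(A)}=e^{-\lambda(A)|u|^\alpha}$; values on disjoint Borel subsets of $[0,\infty)$ are independent; $M(-A)=\overline{M(A)}$. For $f$ with $f(-x)=\overline{f(x)}$, $f\in L^\alpha(\mathbb R)$, $\int f\,dM$ is real S$\alpha$S with $\mathbb E\exp(iu\int f dM)=\exp(-|u|^\alpha\|f\|^\alpha_{L^\alpha})$; $\|\xi\|_\alpha^\alpha:=-\log\mathbb Ee^{i\xi}$, so $\|\int f dM\|_\alpha=\|f\|_{L^\alpha}$. The Hurst function $H:[0,\infty)\to\mathbb R$ satisfies $0<\hat H:=\inf_t H(t)\le\sup_tH(t)=:\check H<1$, and there are $C>0$ and $\gamma>\check H$ with $|H(t)-H(s)|\le C|t-s|^\gamma$ for all $t,s\ge0$. The real harmonizable multifractional stable process (rhmsp) is $X(t)=\int_{\mathbb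 R}\frac{e^{itx}-1}{|x|^{1/\alpha+H(t)}}M(dx)$, $t\ge0$. *)

From Stdlib Require Import Reals Lra.
Open Scope R_scope.

(* x^p for x >= 0 with the convention 0^p = 0 (p > 0 in all uses). *)
Definition rpow0 (x p : R) : R :=
  if Req_EM_T x 0 then 0 else Rpower x p.

(* Kernel f_t(x) = (e^{itx}-1)/|x|^{1/alpha + H(t)}: real and imaginary parts (x <> 0). *)
Definition kerRe (alpha : R) (H : R -> R) (t x : R) : R :=
  (cos (t * x) - 1) / Rpower (Rabs x) (/ alpha + H t).
Definition kerIm (alpha : R) (H : R -> R) (t x : R) : R :=
  sin (t * x) / Rpower (Rabs x) (/ alpha + H t).

(* |f_t(x) - f_s(x)|^alpha *)
Definition rhmsp_integrand (alpha : R) (H : R -> R) (t s x : R) : R :=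
  rpow0 ((kerRe alpha H t x - kerRe alpha H s x) ^ 2
         + (kerIm alpha H t x - kerIm alpha H s x) ^ 2) (alpha / 2).

(* Improper Riemann integral over R of g (possibly singular at 0 and at +-oo):
   lim_{a -> 0+, b -> +oo} (int_{-b}^{-a} g + int_a^b g) = L. *)
Definition ImproperIntegralR (g : R -> R) (L : R) : Prop :=
  forall eps, 0 < eps ->
    exists a0 b0, 0 < a0 < b0 /\
      forall a b, 0 < a < a0 -> b0 < b ->
        exists (p1 : Riemann_integrable g (- b) (- a))
               (p2 : Riemann_integrable g a b),
          Rabs (RiemannInt p1 + RiemannInt p2 - L) < eps.

(* N is the scale parameter ||X(t)-X(s)||_alpha = ||f_t - f_s||_{L^alpha}. *)
Definition rhmsp_incr_norm (alpha : R) (H : R -> R) (t s N : R) : Prop :=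
  exists L, ImproperIntegralR (rhmsp_integrand alpha H t s) L /\ N = rpow0 L (/ alpha).

Definition IsMinOn (H : R -> R) (a b m : R) : Prop :=
  (exists u, a <= u <= b /\ H u = m) /\ (forall u, a <= u <= b -> m <= H u).
Definition IsMaxOn (H : R -> R) (a b m : R) : Prop :=
  (exists u, a <= u <= b /\ H u = m) /\ (forall u, a <= u <= b -> H u <= m).

(* Write [u_t(x) = x^(-(1/alpha + H t))] for [x > 0], so that
     [f_t - f_s = u_t (e^{itx} - e^{isx}) + (u_t - u_s) (e^{isx} - 1)].
   The first term is the kernel of an increment with the Hurst index frozen at [H t]: splitting
   the integral at [x = 1/|t-s|] bounds its [alpha]-th power by a multiple of [|t-s|^(alpha H t)],
   and it dominates on the window [[1/|t-s|, 2/|t-s|]], which gives the matching lower bound.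
   The second term is at most [|H t - H s| |ln x| max(u_t, u_s)]; as [H] is [gamma]-Hoelder
   with [gamma > sup H], it contributes [O(|t-s|^(alpha gamma))], and on the window the
   logarithm is harmless because [|t-s|^gamma ln(1/|t-s|)] is small.  Boundedness of
   [h^gamma ln(1/h)] also lets one trade [H t] for the minimum or maximum of [H] between
   [s] and [t] at the price of a factor [exp(alpha C / gamma)]. *)

From Stdlib Require Import Reals Lra.
From Coquelicot Require Import Coquelicot.
Open Scope R_scope.

Lemma Rpower_gt0 x c : 0 < Rpower x c.
Proof. apply exp_pos. Qed.

Lemma Rpower_1_l c : Rpower 1 c = 1.
Proof. unfold Rpower. rewrite ln_1, Rmult_0_r. apply exp_0. Qed.

Lemma Rpower_Rinv x c : 0 < x -> Rpower (/ x) c = Rpower x (- c).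
Proof. intros. unfold Rpower. rewrite ln_Rinv by lra. f_equal; ring. Qed.

Lemma Rpower_pow2 x c : Rpower x c ^ 2 = Rpower x (2 * c).
Proof. replace (2 * c) with (c + c) by ring. rewrite Rpower_plus. ring. Qed.

Lemma Rle_Rpower_le1 x c d : 0 < x <= 1 -> c <= d -> Rpower x d <= Rpower x c.
Proof.
  intros Hx Hcd. unfold Rpower.
  assert (Hln0 : ln x <= 0) by (rewrite <- ln_1; apply ln_le; lra).
  destruct (Rle_lt_or_eq_dec _ _ Hcd) as [Hlt | ->]; [| lra].
  destruct (Rle_lt_or_eq_dec _ _ Hln0) as [Hln | ->].
  - left. apply exp_increasing. nra.
  - rewrite !Rmult_0_r. lra.
Qed.

Lemma Rle_Rpower_l_neg a c e : 0 < c <= a -> e <= 0 -> Rpower a e <= Rpower c e.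
Proof.
  intros Hca He. unfold Rpower.
  assert (Hln : ln c <= ln a) by (apply ln_le; lra).
  destruct (Rle_lt_or_eq_dec _ _ (Rmult_le_compat_neg_l e _ _ He Hln)) as [Hlt | Heq].
  - left. apply exp_increasing. lra.
  - rewrite Rmult_comm, <- Heq, Rmult_comm. lra.
Qed.

Lemma rpow0_pos x c : 0 < x -> rpow0 x c = Rpower x c.
Proof. intros. unfold rpow0. destruct (Req_EM_T x 0); [lra | auto]. Qed.

Lemma rpow0_0 c : rpow0 0 c = 0.
Proof. unfold rpow0. destruct (Req_EM_T 0 0); [auto | lra]. Qed.

Lemma rpow0_ge0 x c : 0 <= rpow0 x c.
Proof. unfold rpow0. destruct (Req_EM_T x 0); [lra | left; apply Rpower_gt0]. Qed.

Lemma rpow0_gt0 x c : 0 < x -> 0 < rpow0 x c.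
Proof. intros. rewrite rpow0_pos by lra. apply Rpower_gt0. Qed.

Lemma rpow0_le a b c : 0 <= c -> 0 <= a <= b -> rpow0 a c <= rpow0 b c.
Proof.
  intros. destruct (Req_dec a 0) as [-> | Ha].
  - rewrite rpow0_0. apply rpow0_ge0.
  - rewrite !rpow0_pos by lra. apply Rle_Rpower_l; lra.
Qed.

Lemma rpow0_mult a b c : 0 <= a -> 0 <= b -> rpow0 (a * b) c = rpow0 a c * rpow0 b c.
Proof.
  intros. destruct (Req_dec a 0) as [-> | Ha]; [rewrite Rmult_0_l, !rpow0_0; ring |].
  destruct (Req_dec b 0) as [-> | Hb]; [rewrite Rmult_0_r, !rpow0_0; ring |].
  rewrite !rpow0_pos by nra. rewrite Rpower_mult_distr by lra. auto.
Qed.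

Lemma rpow0_rpow0 a c d : 0 <= a -> rpow0 (rpow0 a c) d = rpow0 a (c * d).
Proof.
  intros. destruct (Req_dec a 0) as [-> | Ha]; [rewrite !rpow0_0; auto |].
  rewrite (rpow0_pos a c), rpow0_pos, rpow0_pos by (lra || apply Rpower_gt0).
  apply Rpower_mult.
Qed.

Lemma rpow0_pow2 y c : 0 <= y -> rpow0 (y ^ 2) c = rpow0 y (2 * c).
Proof.
  intros. rewrite <- rpow0_rpow0 by auto.
  destruct (Req_dec y 0) as [-> | Hy]; [rewrite pow_i, !rpow0_0 by apply Nat.lt_0_succ; auto |].
  rewrite (rpow0_pos y 2) by lra. f_equal.
  replace 2 with (INR 2) by (simpl; ring). rewrite Rpower_pow; auto; lra.
Qed.

Lemma rpow0_le_self x c : 1 <= x -> 0 <= c <= 1 -> rpow0 x c <= x.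
Proof.
  intros. rewrite rpow0_pos by lra. rewrite <- (Rpower_1 x) at 2 by lra.
  apply Rle_Rpower; lra.
Qed.

Lemma rpow0_ge_self x c : 0 < x <= 1 -> 0 <= c <= 1 -> x <= rpow0 x c.
Proof.
  intros. rewrite rpow0_pos by lra. rewrite <- (Rpower_1 x) at 1 by lra.
  apply Rle_Rpower_le1; lra.
Qed.

(* For [0 <= c <= 1] the sharp constant is 1; the factor 2 is all we need. *)
Lemma rpow0_add_le a b c : 0 <= a -> 0 <= b -> 0 <= c <= 1 ->
  rpow0 (a + b) c <= 2 * (rpow0 a c + rpow0 b c).
Proof.
  intros Ha Hb Hc.
  assert (H2 : rpow0 2 c <= 2) by (apply rpow0_le_self; lra).
  pose proof (rpow0_ge0 a c). pose proof (rpow0_ge0 b c). pose proof (rpow0_ge0 2 c).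
  assert (Hmax : forall m, 0 <= m -> a + b <= 2 * m -> rpow0 (a + b) c <= 2 * rpow0 m c).
  { intros m Hm Hab. apply Rle_trans with (rpow0 (2 * m) c); [apply rpow0_le; lra |].
    rewrite rpow0_mult by lra. pose proof (rpow0_ge0 m c). nra. }
  destruct (Rle_dec a b).
  - pose proof (Hmax b Hb ltac:(lra)). lra.
  - pose proof (Hmax a Ha ltac:(lra)). lra.
Qed.

Lemma rpow0_le_sqr_Rpower X y x r p : 0 < x -> 0 <= p ->
  0 <= X <= y ^ 2 * Rpower x r ->
  rpow0 X (p / 2) <= rpow0 (Rabs y) p * Rpower x (r * (p / 2)).
Proof.
  intros Hx Hp HX. apply Rle_trans with (rpow0 (y ^ 2 * Rpower x r) (p / 2)).
  { apply rpow0_le; lra. }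
  rewrite rpow0_mult by (apply pow2_ge_0 || (left; apply Rpower_gt0)).
  rewrite <- pow2_abs, rpow0_pow2, (rpow0_pos (Rpower x r)), Rpower_mult
    by (apply Rabs_pos || apply Rpower_gt0).
  replace (2 * (p / 2)) with p by field. lra.
Qed.

Lemma continuous_Rpower x c : 0 < x -> continuous (fun y => Rpower y c) x.
Proof.
  intros. apply continuity_pt_filterlim, derivable_continuous_pt.
  exists (c * Rpower x (c - 1)). apply derivable_pt_lim_power; auto.
Qed.

Lemma is_RInt_Rpower a b p : 0 < a <= b -> p <> 0 ->
  is_RInt (fun x => Rpower x (p - 1)) a b ((Rpower b p - Rpower a p) / p).
Proof.
  intros Hab Hp.
  replace ((Rpower b p - Rpower a p) / p) with
    (minus (Rpower b p / p) (Rpower a p / p)) by (unfold minus, plus, opp; simpl; field; auto).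
  apply (is_RInt_derive (fun y => Rpower y p / p)); rewrite Rmin_left, Rmax_right by lra.
  - intros x Hx.
    assert (D := derivable_pt_lim_power x p ltac:(lra)).
    apply is_derive_Reals, (is_derive_scal_l _ _ _ (/ p)) in D.
    replace (Rpower x (p - 1)) with (scal (p * Rpower x (p - 1)) (/ p))
      by (unfold scal; simpl; unfold mult; simpl; field; auto).
    eapply is_derive_ext; [| exact D].
    intros y. unfold scal; simpl; unfold mult; simpl. unfold Rdiv. ring.
  - intros x Hx. apply continuous_Rpower. lra.
Qed.

Lemma ex_RInt_pos (g : R -> R) a b :
  (forall x, 0 < x -> continuous g x) -> 0 < a <= b -> ex_RInt g a b.
Proof.
  intros Hg Hab. apply (@ex_RInt_continuous R_CompleteNormedModule). intros z Hz.
  rewrite Rmin_left, Rmax_right in Hz by lra. apply Hg. lra.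
Qed.

Lemma RInt_le_Rpower (g : R -> R) a b K p :
  0 < a <= b -> p <> 0 -> (forall x, 0 < x -> continuous g x) ->
  (forall x, a < x < b -> g x <= K * Rpower x (p - 1)) ->
  RInt g a b <= K * ((Rpower b p - Rpower a p) / p).
Proof.
  intros Hab Hp Hg Hle.
  assert (I := is_RInt_scal _ _ _ K _ (is_RInt_Rpower a b p Hab Hp)).
  replace (K * ((Rpower b p - Rpower a p) / p)) with (RInt (fun x => K * Rpower x (p - 1)) a b)
    by exact (is_RInt_unique _ _ _ _ I).
  apply RInt_le; [lra | apply ex_RInt_pos; auto | eexists; eauto | auto].
Qed.

Lemma RInt_le_Rpower_pos (g : R -> R) a b c K p :
  0 < p -> 0 <= K -> 0 < a <= b -> b <= c -> (forall x, 0 < x -> continuous g x) ->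
  (forall x, a < x < b -> g x <= K * Rpower x (p - 1)) ->
  RInt g a b <= K * (Rpower c p / p).
Proof.
  intros Hp HK Hab Hbc Hg Hle.
  eapply Rle_trans; [apply (RInt_le_Rpower g a b K p); auto; lra |].
  apply Rmult_le_compat_l; auto. unfold Rdiv. apply Rmult_le_compat_r.
  - left. apply Rinv_0_lt_compat. auto.
  - pose proof (Rpower_gt0 a p). pose proof (Rle_Rpower_l b c p ltac:(lra) ltac:(lra)). lra.
Qed.

Lemma RInt_le_Rpower_neg (g : R -> R) a b c K p :
  p < 0 -> 0 <= K -> 0 < c <= a -> a <= b -> (forall x, 0 < x -> continuous g x) ->
  (forall x, a < x < b -> g x <= K * Rpower x (p - 1)) ->
  RInt g a b <= K * (Rpower c p / - p).
Proof.
  intros Hp HK Hca Hab Hg Hle.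
  eapply Rle_trans; [apply (RInt_le_Rpower g a b K p); auto; lra |].
  apply Rmult_le_compat_l; auto.
  replace ((Rpower b p - Rpower a p) / p) with ((Rpower a p - Rpower b p) / - p) by (field; lra).
  unfold Rdiv. apply Rmult_le_compat_r.
  - left. apply Rinv_0_lt_compat. lra.
  - pose proof (Rpower_gt0 b p). pose proof (Rle_Rpower_l_neg a c p ltac:(lra) ltac:(lra)). lra.
Qed.

(* Degenerate intervals are allowed on both sides, so [U1] and [U2] are nonnegative. *)
Lemma RInt_le_split (g : R -> R) c U1 U2 :
  0 < c -> (forall x, 0 < x -> continuous g x) ->
  (forall a b, 0 < a <= b -> b <= c -> RInt g a b <= U1) ->
  (forall a b, c <= a <= b -> RInt g a b <= U2) ->
  forall a b, 0 < a <= b -> RInt g a b <= U1 + U2.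
Proof.
  intros Hc Hg H1 H2 a b Hab.
  assert (Hcc : RInt g c c = 0) by apply (@RInt_point R_CompleteNormedModule).
  pose proof (H1 c c ltac:(lra) ltac:(lra)). pose proof (H2 c c ltac:(lra)).
  destruct (Rle_dec b c); [pose proof (H1 a b Hab ltac:(lra)); lra |].
  destruct (Rle_dec c a); [pose proof (H2 a b ltac:(lra)); lra |].
  rewrite <- (@RInt_Chasles R_CompleteNormedModule g a c b) by (apply ex_RInt_pos; auto; lra).
  pose proof (H1 a c ltac:(lra) ltac:(lra)). pose proof (H2 c b ltac:(lra)).
  unfold plus; simpl. lra.
Qed.

Section EvenIntegrand.

Variable g : R -> R.
Hypothesis g_cont : forall x, x <> 0 -> continuous g x.
Hypothesis g_even : forall x, g (- x) = g x.
Hypothesis g_ge0 : forall x, 0 <= g x.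

Let ex_RInt_g a b : 0 < a <= b -> ex_RInt g a b.
Proof. intros. apply ex_RInt_pos; auto. intros x Hx. apply g_cont. lra. Qed.

Let ex_RInt_g_opp a b : 0 < a <= b -> ex_RInt g (- b) (- a).
Proof.
  intros Hab. apply (@ex_RInt_continuous R_CompleteNormedModule). intros z Hz.
  rewrite Rmin_left, Rmax_right in Hz by lra. apply g_cont. lra.
Qed.

Lemma RInt_even_opp a b : 0 < a <= b -> RInt g (- b) (- a) = RInt g a b.
Proof.
  intros Hab.
  assert (E := @RInt_comp_lin R_CompleteNormedModule g (-1) 0 a b).
  replace (-1 * a + 0) with (- a) in E by ring. replace (-1 * b + 0) with (- b) in E by ring.
  specialize (E (ex_RInt_swap _ _ _ (ex_RInt_g_opp a b Hab))).
  rewrite (RInt_ext _ (fun y => opp (g y))) in E.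
  - rewrite (@RInt_opp R_CompleteNormedModule) in E by (apply ex_RInt_g; auto).
    rewrite <- (@opp_RInt_swap R_CompleteNormedModule g (- b) (- a)) in E
      by (apply ex_RInt_g_opp; auto).
    unfold opp in E; simpl in E. lra.
  - intros x _. unfold scal; simpl; unfold mult, opp; simpl.
    replace (-1 * x + 0) with (- x) by ring. rewrite g_even. ring.
Qed.

Lemma RInt_le_superinterval a a1 b1 b :
  0 < a <= a1 -> a1 <= b1 <= b -> RInt g a1 b1 <= RInt g a b.
Proof.
  intros Ha Hb.
  rewrite <- (@RInt_Chasles R_CompleteNormedModule g a a1 b),
    <- (@RInt_Chasles R_CompleteNormedModule g a1 b1 b) by (apply ex_RInt_g; lra).
  unfold plus; simpl.
  assert (0 <= RInt g a a1) by (apply RInt_ge_0; [lra | apply ex_RInt_g; lra | auto]).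
  assert (0 <= RInt g b1 b) by (apply RInt_ge_0; [lra | apply ex_RInt_g; lra | auto]).
  lra.
Qed.

(* The improper integral is twice the supremum of the integrals over [a, b] in (0, oo). *)
Lemma ImproperIntegralR_even_bounded M :
  (forall a b, 0 < a <= b -> RInt g a b <= M) ->
  exists L, ImproperIntegralR g L /\ L <= 2 * M /\
    forall a b, 0 < a <= b -> 2 * RInt g a b <= L.
Proof.
  intros HM.
  set (E := fun y => exists a b, 0 < a <= b /\ y = RInt g a b).
  assert (HE : exists y, E y) by (exists (RInt g 1 1), 1, 1; split; auto; lra).
  assert (HB : bound E) by (exists M; intros y (a & b & Hab & ->); auto).
  destruct (completeness E HB HE) as [S [HS1 HS2]].
  assert (HgS : forall a b, 0 < a <= b -> RInt g a b <= S)
    by (intros; apply HS1; exists a, b; auto).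
  exists (2 * S). split; [| split].
  - intros eps Heps.
    assert (Hex : exists a1 b1, 0 < a1 <= b1 /\ S - eps / 2 < RInt g a1 b1).
    { apply Classical_Prop.NNPP. intro Hn.
      enough (S <= S - eps / 2) by lra.
      apply HS2. intros y (a & b & Hab & ->).
      apply Rnot_lt_le. intro Hl. apply Hn. exists a, b. auto. }
    destruct Hex as (a1 & b1 & Hab1 & Hl).
    exists a1, (b1 + 1). split; [lra |]. intros a b Ha Hb.
    assert (Hab : 0 < a <= b) by lra.
    exists (ex_RInt_Reals_0 _ _ _ (ex_RInt_g_opp a b Hab)).
    exists (ex_RInt_Reals_0 _ _ _ (ex_RInt_g a b Hab)).
    rewrite <- !RInt_Reals, RInt_even_opp by auto.
    pose proof (RInt_le_superinterval a a1 b1 b ltac:(lra) ltac:(lra)).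
    pose proof (HgS a b Hab). apply Rabs_def1; lra.
  - enough (S <= M) by lra. apply HS2. intros y (a & b & Hab & ->). auto.
  - intros a b Hab. pose proof (HgS a b Hab). lra.
Qed.

End EvenIntegrand.

Lemma cos_sin_dist2 a b : (cos a - cos b) ^ 2 + (sin a - sin b) ^ 2 = 2 - 2 * cos (a - b).
Proof.
  rewrite cos_minus. pose proof (sin2_cos2 a). pose proof (sin2_cos2 b).
  unfold Rsqr in *. nra.
Qed.

Lemma cos_sin_dist2_0 a : (cos a - 1) ^ 2 + sin a ^ 2 = 2 - 2 * cos a.
Proof.
  rewrite <- (Rminus_0_r a) at 3. rewrite <- cos_sin_dist2, cos_0, sin_0. ring.
Qed.

Lemma Rabs_sin_le z : Rabs (sin z) <= Rabs z.
Proof.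
  assert (Hpos : forall y, 0 < y -> Rabs (sin y) <= Rabs y).
  { intros y Hy. pose proof (sin_lt_x y Hy). pose proof (SIN_bound y).
    destruct (Rlt_dec y 1) as [Hy1 | Hy1].
    - assert (0 < sin y) by (apply sin_gt_0; pose proof PI2_1; lra).
      rewrite !Rabs_right; lra.
    - rewrite (Rabs_right y) by lra. apply Rabs_le. lra. }
  destruct (Rtotal_order z 0) as [Hz | [-> | Hz]].
  - rewrite <- (Rabs_Ropp z), <- (Rabs_Ropp (sin z)), <- sin_neg. apply Hpos. lra.
  - rewrite sin_0. lra.
  - auto.
Qed.

Lemma two_sub_two_cos_le_sqr y : 2 - 2 * cos y <= y ^ 2.
Proof.
  replace y with (2 * (y / 2)) at 1 by field. rewrite cos_2a_sin.
  pose proof (Rabs_sin_le (y / 2)) as Hs.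
  assert (sin (y / 2) ^ 2 <= (y / 2) ^ 2).
  { rewrite <- (pow2_abs (sin _)), <- (pow2_abs (y / 2)).
    pose proof (Rabs_pos (sin (y / 2))). nra. }
  nra.
Qed.

Lemma two_sub_two_cos_bounds y : 0 <= 2 - 2 * cos y <= 4.
Proof. pose proof (COS_bound y). lra. Qed.

Lemma two_sub_two_cos_ge y : 1 <= Rabs y <= 2 -> 4 / 5 <= 2 - 2 * cos y.
Proof.
  intros Hy. replace (cos y) with (cos (Rabs y))
    by (unfold Rabs; destruct Rcase_abs; auto using cos_neg).
  set (z := Rabs y) in *.
  destruct (pre_cos_bound z 0 ltac:(lra) ltac:(lra)) as [_ Hc].
  unfold cos_approx, cos_term in Hc. simpl in Hc.
  assert (1 <= z ^ 2 <= 4) by nra.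
  assert ((z ^ 2 - 1) * (z ^ 2 - 4) <= 0) by nra.
  nra.
Qed.

Lemma sum_sqr_add_le p1 p2 q1 q2 :
  (p1 + q1) ^ 2 + (p2 + q2) ^ 2 <= 2 * (p1 ^ 2 + p2 ^ 2) + 2 * (q1 ^ 2 + q2 ^ 2).
Proof. pose proof (pow2_ge_0 (p1 - q1)). pose proof (pow2_ge_0 (p2 - q2)). nra. Qed.

Lemma sum_sqr_add_ge p1 p2 q1 q2 :
  (p1 ^ 2 + p2 ^ 2) / 2 - (q1 ^ 2 + q2 ^ 2) <= (p1 + q1) ^ 2 + (p2 + q2) ^ 2.
Proof. pose proof (pow2_ge_0 (p1 + 2 * q1)). pose proof (pow2_ge_0 (p2 + 2 * q2)). nra. Qed.

Lemma exp_le a b : a <= b -> exp a <= exp b.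
Proof. intros [Hab | ->]; [left; apply exp_increasing; auto | lra]. Qed.

Lemma Rabs_exp_sub_le a b : Rabs (exp a - exp b) <= Rabs (a - b) * Rmax (exp a) (exp b).
Proof.
  assert (K : forall a b, a <= b -> exp b - exp a <= (b - a) * exp b).
  { intros x y Hxy. pose proof (exp_ineq1_le (x - y)). pose proof (exp_pos y).
    replace (exp x) with (exp y * exp (x - y)) by (rewrite <- exp_plus; f_equal; ring).
    nra. }
  destruct (Rle_dec a b) as [Hab | Hab].
  - pose proof (K a b Hab). pose proof (exp_le a b Hab).
    rewrite Rmax_right, !Rabs_left1 by lra. lra.
  - pose proof (K b a ltac:(lra)). pose proof (exp_le b a ltac:(lra)).
    rewrite Rmax_left, !Rabs_right by lra. lra.
Qed.

Lemma Rsqr_sub_le_of_Rmax u v : 0 <= u -> 0 <= v -> Rabs (u - v) <= Rmax u v / 10 ->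
  (u - v) ^ 2 <= u ^ 2 / 81.
Proof.
  intros Hu Hv Huv. assert (Habs : Rabs (u - v) <= u / 9).
  { unfold Rmax in Huv. destruct (Rle_dec u v).
    - rewrite Rabs_left1 in * by lra. lra.
    - lra. }
  rewrite <- (pow2_abs (u - v)). replace (u ^ 2 / 81) with ((u / 9) ^ 2) by field.
  apply pow_incr. split; [apply Rabs_pos | auto].
Qed.

Lemma Rpower_window_ge h q x : 0 < h -> 0 <= q <= 2 -> 0 < x <= 2 / h ->
  Rpower h q * h / 8 <= Rpower x (- (1 + q)).
Proof.
  intros Hh Hq Hx.
  eapply Rle_trans; [| apply (Rle_Rpower_l_neg (2 / h)); lra].
  unfold Rdiv at 2. rewrite <- Rpower_mult_distr, Rpower_Rinv, Ropp_involutive, Rpower_Ropp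
    by (lra || apply Rinv_0_lt_compat; lra).
  rewrite (Rpower_plus 1 q h), (Rpower_1 h) by lra.
  assert (Rpower 2 (1 + q) <= 8).
  { replace 8 with (Rpower 2 (INR 3)) by (rewrite Rpower_pow; simpl; lra).
    apply Rle_Rpower; simpl; lra. }
  assert (/ 8 <= / Rpower 2 (1 + q)) by (apply Rinv_le_contravar; [apply Rpower_gt0 | auto]).
  pose proof (Rpower_gt0 h q).
  replace (Rpower h q * h / 8) with (/ 8 * (h * Rpower h q)) by field.
  apply Rmult_le_compat_r; [nra | auto].
Qed.

Lemma ln_le_Rpower_div y e : 1 <= y -> 0 < e -> ln y <= Rpower y e / e.
Proof.
  intros Hy He.
  assert (e * ln y <= Rpower y e).
  { rewrite <- ln_Rpower. pose proof (exp_ineq1_le (ln (Rpower y e))) as Hexp.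
    rewrite exp_ln in Hexp by apply Rpower_gt0. lra. }
  apply (Rmult_le_reg_l e); auto. field_simplify; lra.
Qed.

Lemma sqr_ln_le_ge1 x e : 1 <= x -> 0 < e -> ln x ^ 2 <= Rpower x (2 * e) / e ^ 2.
Proof.
  intros Hx He. assert (0 <= ln x) by (rewrite <- ln_1; apply ln_le; lra).
  pose proof (ln_le_Rpower_div x e Hx He).
  rewrite <- Rpower_pow2.
  replace (Rpower x e ^ 2 / e ^ 2) with ((Rpower x e / e) ^ 2) by (field; lra).
  apply pow_incr. lra.
Qed.

Lemma sqr_ln_le_le1 x e : 0 < x <= 1 -> 0 < e -> ln x ^ 2 <= Rpower x (- (2 * e)) / e ^ 2.
Proof.
  intros Hx He. rewrite <- Rpower_Rinv by lra.
  replace (ln x ^ 2) with (ln (/ x) ^ 2) by (rewrite ln_Rinv by lra; ring).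
  apply sqr_ln_le_ge1; auto. rewrite <- Rinv_1. apply Rinv_le_contravar; lra.
Qed.

Lemma continuity_pt_rpow0_abs c y : 0 < c -> continuity_pt (fun z => rpow0 (Rabs z) c) y.
Proof.
  intros Hc. destruct (Req_dec y 0) as [-> | Hy].
  - intros eps Heps. exists (Rpower eps (/ c)). split; [apply Rpower_gt0 |].
    intros z [_ Hz]. simpl in *. unfold R_dist in *. rewrite Rminus_0_r in Hz.
    rewrite Rabs_R0, rpow0_0, Rminus_0_r.
    destruct (Req_dec z 0) as [-> | Hz0]; [rewrite Rabs_R0, rpow0_0, Rabs_R0; lra |].
    rewrite rpow0_pos, Rabs_right by (apply Rabs_pos_lt, Hz0 || (left; apply Rpower_gt0)).
    replace eps with (Rpower (Rpower eps (/ c)) c)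
      by (rewrite Rpower_mult, Rinv_l by lra; apply Rpower_1; lra).
    apply Rlt_Rpower_l; auto. split; auto. apply Rabs_pos_lt; auto.
  - apply (continuity_pt_locally_ext (fun z => Rpower (Rabs z) c) _ (Rabs y)).
    + apply Rabs_pos_lt; auto.
    + intros z Hz. unfold Rdist in Hz. rewrite rpow0_pos; auto.
      apply Rabs_pos_lt. intros ->. rewrite Rminus_0_l, Rabs_Ropp in Hz. lra.
    + apply (continuity_pt_comp Rabs (fun z => Rpower z c)); [apply Rcontinuity_abs |].
      apply continuity_pt_filterlim, continuous_Rpower, Rabs_pos_lt; auto.
Qed.

Lemma continuity_pt_Rpower_abs c x : x <> 0 -> continuity_pt (fun y => Rpower (Rabs y) c) x.
Proof.
  intros. apply (continuity_pt_comp Rabs (fun y => Rpower y c)); [apply Rcontinuity_abs |].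
  apply continuity_pt_filterlim, continuous_Rpower, Rabs_pos_lt. auto.
Qed.

Lemma continuity_pt_rpow0 (f : R -> R) c x : 0 < c -> (forall y, 0 <= f y) ->
  continuity_pt f x -> continuity_pt (fun y => rpow0 (f y) c) x.
Proof.
  intros Hc Hf Hx. apply (continuity_pt_ext (fun y => rpow0 (Rabs (f y)) c)).
  - intros y. rewrite Rabs_right; auto. apply Rle_ge, Hf.
  - apply (continuity_pt_comp f (fun z => rpow0 (Rabs z) c)); auto.
    apply continuity_pt_rpow0_abs; auto.
Qed.

Lemma continuity_pt_sqr (f : R -> R) x : continuity_pt f x -> continuity_pt (fun y => f y ^ 2) x.
Proof.
  intros. apply (continuity_pt_ext (mult_fct f f)); [intros; unfold mult_fct; ring |].
  apply continuity_pt_mult; auto.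
Qed.

Lemma continuity_pt_trig_mult (trig : R -> R) c x : continuity trig ->
  continuity_pt (fun y => trig (c * y)) x.
Proof.
  intros Htrig. apply (continuity_pt_comp (fun y => c * y) trig); auto.
  apply continuity_pt_scal, derivable_continuous_pt, derivable_pt_id.
Qed.

Lemma continuity_pt_chord_sqr (u : R -> R) c x : continuity_pt u x ->
  continuity_pt (fun y => u y ^ 2 * (2 - 2 * cos (c * y))) x.
Proof.
  intros Hu. apply (continuity_pt_mult (fun y => u y ^ 2)); [apply continuity_pt_sqr; auto |].
  apply continuity_pt_minus; [apply continuity_pt_const; intros ? ?; auto |].
  apply continuity_pt_scal, continuity_pt_trig_mult, continuity_cos.
Qed.

Section Kernel.

Variables (alpha : R) (H : R -> R).
Hypothesis Halpha : 0 < alpha <= 2.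

Definition kerAmp (t x : R) : R := Rpower x (- (/ alpha + H t)).

Lemma kerRe_eq t x : 0 < x -> kerRe alpha H t x = (cos (t * x) - 1) * kerAmp t x.
Proof. intros. unfold kerRe, kerAmp. rewrite Rabs_right, Rpower_Ropp by lra. auto. Qed.

Lemma kerIm_eq t x : 0 < x -> kerIm alpha H t x = sin (t * x) * kerAmp t x.
Proof. intros. unfold kerIm, kerAmp. rewrite Rabs_right, Rpower_Ropp by lra. auto. Qed.

Definition incr_sqr (t s x : R) : R :=
  (kerRe alpha H t x - kerRe alpha H s x) ^ 2 + (kerIm alpha H t x - kerIm alpha H s x) ^ 2.

(* [f_t - f_s = u_t (e^{itx} - e^{isx}) + (u_t - u_s) (e^{isx} - 1)] with [u_t = kerAmp t]:
   the first term freezes the Hurst index at [H t], the second measures its variation. *)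
Definition frozen_sqr (t s x : R) : R := kerAmp t x ^ 2 * (2 - 2 * cos ((t - s) * x)).
Definition index_var_sqr (t s x : R) : R :=
  (kerAmp t x - kerAmp s x) ^ 2 * (2 - 2 * cos (s * x)).

Lemma incr_sqr_ge0 t s x : 0 <= incr_sqr t s x.
Proof.
  unfold incr_sqr. pose proof (pow2_ge_0 (kerRe alpha H t x - kerRe alpha H s x)).
  pose proof (pow2_ge_0 (kerIm alpha H t x - kerIm alpha H s x)). lra.
Qed.

Lemma incr_sqr_even t s x : incr_sqr t s (- x) = incr_sqr t s x.
Proof.
  unfold incr_sqr, kerRe, kerIm. rewrite Rabs_Ropp.
  replace (t * - x) with (- (t * x)) by ring. replace (s * - x) with (- (s * x)) by ring.
  rewrite !cos_neg, !sin_neg. unfold Rdiv. ring.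
Qed.

Lemma frozen_sqr_ge0 t s x : 0 <= frozen_sqr t s x.
Proof.
  pose proof (two_sub_two_cos_bounds ((t - s) * x)). pose proof (pow2_ge_0 (kerAmp t x)).
  unfold frozen_sqr. nra.
Qed.

Lemma index_var_sqr_ge0 t s x : 0 <= index_var_sqr t s x.
Proof.
  pose proof (two_sub_two_cos_bounds (s * x)). pose proof (pow2_ge_0 (kerAmp t x - kerAmp s x)).
  unfold index_var_sqr. nra.
Qed.

Lemma ker_sub_split t s x : 0 < x ->
  (kerRe alpha H t x - kerRe alpha H s x = kerAmp t x * (cos (t * x) - cos (s * x))
     + (kerAmp t x - kerAmp s x) * (cos (s * x) - 1)) /\
  (kerIm alpha H t x - kerIm alpha H s x = kerAmp t x * (sin (t * x) - sin (s * x))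
     + (kerAmp t x - kerAmp s x) * sin (s * x)).
Proof. intros. rewrite !kerRe_eq, !kerIm_eq by auto. split; ring. Qed.

Lemma incr_sqr_le t s x : 0 < x ->
  incr_sqr t s x <= 2 * frozen_sqr t s x + 2 * index_var_sqr t s x.
Proof.
  intros Hx. unfold incr_sqr, frozen_sqr, index_var_sqr.
  destruct (ker_sub_split t s x Hx) as [-> ->].
  replace ((t - s) * x) with (t * x - s * x) by ring.
  rewrite <- cos_sin_dist2, <- cos_sin_dist2_0.
  eapply Rle_trans; [apply sum_sqr_add_le | right; ring].
Qed.

Lemma incr_sqr_ge t s x : 0 < x ->
  frozen_sqr t s x / 2 - index_var_sqr t s x <= incr_sqr t s x.
Proof.
  intros Hx. unfold incr_sqr, frozen_sqr, index_var_sqr.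
  destruct (ker_sub_split t s x Hx) as [-> ->].
  replace ((t - s) * x) with (t * x - s * x) by ring.
  rewrite <- cos_sin_dist2, <- cos_sin_dist2_0.
  eapply Rle_trans; [| apply sum_sqr_add_ge]; right; field.
Qed.

Lemma continuity_pt_kerAmp t x : 0 < x -> continuity_pt (kerAmp t) x.
Proof. intros. apply continuity_pt_filterlim, continuous_Rpower. auto. Qed.

Lemma continuity_pt_kerRe t x : x <> 0 -> continuity_pt (kerRe alpha H t) x.
Proof.
  intros.
  apply (continuity_pt_div (fun y => cos (t * y) - 1) (fun y => Rpower (Rabs y) (/ alpha + H t))).
  - apply continuity_pt_minus; [apply continuity_pt_trig_mult, continuity_cos |].
    apply continuity_pt_const. intros ? ?. auto.
  - apply continuity_pt_Rpower_abs. auto.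
  - apply Rgt_not_eq, Rpower_gt0.
Qed.

Lemma continuity_pt_kerIm t x : x <> 0 -> continuity_pt (kerIm alpha H t) x.
Proof.
  intros.
  apply (continuity_pt_div (fun y => sin (t * y)) (fun y => Rpower (Rabs y) (/ alpha + H t))).
  - apply continuity_pt_trig_mult, continuity_sin.
  - apply continuity_pt_Rpower_abs. auto.
  - apply Rgt_not_eq, Rpower_gt0.
Qed.

Lemma continuous_integrand t s x : x <> 0 -> continuous (rhmsp_integrand alpha H t s) x.
Proof.
  intros. apply continuity_pt_filterlim, (continuity_pt_rpow0 (incr_sqr t s));
    [lra | apply incr_sqr_ge0 |].
  apply (continuity_pt_plus (fun y => _ ^ 2) (fun y => _ ^ 2)); apply continuity_pt_sqr;
    apply continuity_pt_minus; auto using continuity_pt_kerRe, continuity_pt_kerIm.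
Qed.

Lemma continuous_frozen_pow t s x : 0 < x ->
  continuous (fun y => rpow0 (frozen_sqr t s y) (alpha / 2)) x.
Proof.
  intros. apply continuity_pt_filterlim, continuity_pt_rpow0; [lra | apply frozen_sqr_ge0 |].
  apply (continuity_pt_chord_sqr (kerAmp t) (t - s)), continuity_pt_kerAmp. auto.
Qed.

Lemma continuous_index_var_pow t s x : 0 < x ->
  continuous (fun y => rpow0 (index_var_sqr t s y) (alpha / 2)) x.
Proof.
  intros. apply continuity_pt_filterlim, continuity_pt_rpow0; [lra | apply index_var_sqr_ge0 |].
  apply (continuity_pt_chord_sqr (fun y => kerAmp t y - kerAmp s y) s).
  apply continuity_pt_minus; apply continuity_pt_kerAmp; auto.
Qed.

Lemma integrand_le_terms t s x : 0 < x ->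
  rhmsp_integrand alpha H t s x <=
  4 * (rpow0 (frozen_sqr t s x) (alpha / 2) + rpow0 (index_var_sqr t s x) (alpha / 2)).
Proof.
  intros Hx. pose proof (frozen_sqr_ge0 t s x). pose proof (index_var_sqr_ge0 t s x).
  assert (Hdouble : forall X, 0 <= X -> rpow0 (2 * X) (alpha / 2) <= 2 * rpow0 X (alpha / 2)).
  { intros X HX. rewrite rpow0_mult by lra. pose proof (rpow0_ge0 X (alpha / 2)).
    assert (rpow0 2 (alpha / 2) <= 2) by (apply rpow0_le_self; lra). nra. }
  apply Rle_trans with (rpow0 (2 * frozen_sqr t s x + 2 * index_var_sqr t s x) (alpha / 2)).
  { apply rpow0_le; [lra |]. split; [apply incr_sqr_ge0 | apply incr_sqr_le; auto]. }
  eapply Rle_trans; [apply rpow0_add_le; lra |].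
  pose proof (Hdouble _ (frozen_sqr_ge0 t s x)). pose proof (Hdouble _ (index_var_sqr_ge0 t s x)).
  lra.
Qed.

Lemma RInt_integrand_le_terms t s a b : 0 < a <= b ->
  RInt (rhmsp_integrand alpha H t s) a b <=
  4 * (RInt (fun x => rpow0 (frozen_sqr t s x) (alpha / 2)) a b
       + RInt (fun x => rpow0 (index_var_sqr t s x) (alpha / 2)) a b).
Proof.
  intros Hab.
  assert (HF := ex_RInt_pos _ a b (continuous_frozen_pow t s) Hab).
  assert (HV := ex_RInt_pos _ a b (continuous_index_var_pow t s) Hab).
  rewrite <- (RInt_plus (V := R_CompleteNormedModule)), <- (RInt_scal (V := R_CompleteNormedModule))
    by (auto || apply (ex_RInt_plus (V := R_CompleteNormedModule)); auto).
  apply RInt_le; [lra | | | intros x Hx; apply integrand_le_terms; lra].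
  - apply ex_RInt_pos; auto. intros x Hx. apply continuous_integrand. lra.
  - apply (ex_RInt_scal (V := R_CompleteNormedModule)).
    apply (ex_RInt_plus (V := R_CompleteNormedModule)); auto.
Qed.

Lemma frozen_sqr_le t s x W : 0 < x -> 2 - 2 * cos ((t - s) * x) <= W ->
  frozen_sqr t s x <= W * Rpower x (- (2 * (/ alpha + H t))).
Proof.
  intros Hx HW. unfold frozen_sqr, kerAmp. rewrite Rpower_pow2.
  replace (2 * - (/ alpha + H t)) with (- (2 * (/ alpha + H t))) by ring.
  pose proof (Rpower_gt0 x (- (2 * (/ alpha + H t)))). nra.
Qed.

Lemma frozen_pow_le_near t s x : 0 < x ->
  rpow0 (frozen_sqr t s x) (alpha / 2) <=
  rpow0 (Rabs (t - s)) alpha * Rpower x (alpha * (1 - H t) - 1).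
Proof.
  intros Hx.
  replace (alpha * (1 - H t) - 1) with ((2 - 2 * (/ alpha + H t)) * (alpha / 2)) by (field; lra).
  apply rpow0_le_sqr_Rpower; [auto | lra |]. split; [apply frozen_sqr_ge0 |].
  eapply Rle_trans; [apply frozen_sqr_le; [auto | apply two_sub_two_cos_le_sqr] |].
  replace (2 - 2 * (/ alpha + H t)) with (INR 2 + - (2 * (/ alpha + H t))) by (simpl; ring).
  rewrite Rpower_plus, Rpower_pow by auto. apply Req_le. simpl. ring.
Qed.

Lemma frozen_pow_le_far t s x : 0 < x ->
  rpow0 (frozen_sqr t s x) (alpha / 2) <= 4 * Rpower x (- (alpha * H t) - 1).
Proof.
  intros Hx.
  replace (- (alpha * H t) - 1) with (- (2 * (/ alpha + H t)) * (alpha / 2)) by (field; lra).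
  apply Rle_trans with (rpow0 (Rabs 2) alpha * Rpower x (- (2 * (/ alpha + H t)) * (alpha / 2))).
  - apply rpow0_le_sqr_Rpower; [auto | lra |]. split; [apply frozen_sqr_ge0 |].
    apply frozen_sqr_le; auto. pose proof (two_sub_two_cos_bounds ((t - s) * x)). lra.
  - apply Rmult_le_compat_r; [left; apply Rpower_gt0 |].
    rewrite Rabs_right, rpow0_pos by lra.
    replace 4 with (Rpower 2 (INR 2)) by (rewrite Rpower_pow; simpl; lra).
    apply Rle_Rpower; simpl; lra.
Qed.

(* Split at [x = 1 / |t - s|], beyond which [cos ((t - s) x)] no longer helps. *)
Lemma RInt_frozen_pow_le t s a b : 0 < H t < 1 -> t <> s -> 0 < a <= b ->
  RInt (fun x => rpow0 (frozen_sqr t s x) (alpha / 2)) a b <=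
  (/ (alpha * (1 - H t)) + 4 / (alpha * H t)) * Rpower (Rabs (t - s)) (alpha * H t).
Proof.
  intros HHt Hts Hab. set (h := Rabs (t - s)).
  assert (Hh : 0 < h) by (apply Rabs_pos_lt; lra).
  assert (Hp : 0 < alpha * (1 - H t)) by (apply Rmult_lt_0_compat; lra).
  assert (Hq : 0 < alpha * H t) by (apply Rmult_lt_0_compat; lra).
  assert (Hh' : 0 < / h) by (apply Rinv_0_lt_compat; auto).
  rewrite Rmult_plus_distr_r.
  apply (RInt_le_split _ (/ h)); [auto | apply continuous_frozen_pow | | | auto].
  - intros a' b' Hab' Hb'. eapply Rle_trans.
    + apply (RInt_le_Rpower_pos _ a' b' (/ h) (rpow0 h alpha) (alpha * (1 - H t)));
        auto using rpow0_ge0, continuous_frozen_pow.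
      intros x Hx. apply frozen_pow_le_near. lra.
    + rewrite rpow0_pos, Rpower_Rinv by auto.
      replace (alpha * H t) with (alpha + - (alpha * (1 - H t))) by ring.
      rewrite Rpower_plus. apply Req_le. field. lra.
  - intros a' b' Hab'. eapply Rle_trans.
    + apply (RInt_le_Rpower_neg _ a' b' (/ h) 4 (- (alpha * H t))); try lra.
      * apply continuous_frozen_pow.
      * intros x Hx. apply frozen_pow_le_far. lra.
    + rewrite Rpower_Rinv, Ropp_involutive by auto. apply Req_le. field. lra.
Qed.

Lemma kerAmp_sub_le t s x : 0 < x ->
  Rabs (kerAmp t x - kerAmp s x) <= Rabs (H t - H s) * Rabs (ln x) * Rmax (kerAmp t x) (kerAmp s x).
Proof.
  intros. unfold kerAmp, Rpower. eapply Rle_trans; [apply Rabs_exp_sub_le |].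
  apply Req_le. f_equal. rewrite <- Rabs_mult, <- Rabs_Ropp. f_equal. ring.
Qed.

Lemma index_var_sqr_le t s x M W : 0 < x -> kerAmp t x <= M -> kerAmp s x <= M ->
  2 - 2 * cos (s * x) <= W -> index_var_sqr t s x <= (H t - H s) ^ 2 * ln x ^ 2 * M ^ 2 * W.
Proof.
  intros Hx Ht Hs HW. unfold index_var_sqr.
  assert (0 < kerAmp t x) by apply Rpower_gt0.
  assert (Hmax : Rmax (kerAmp t x) (kerAmp s x) <= M) by (apply Rmax_lub; auto).
  assert ((kerAmp t x - kerAmp s x) ^ 2 <= (H t - H s) ^ 2 * ln x ^ 2 * M ^ 2).
  { rewrite <- (pow2_abs (kerAmp t x - kerAmp s x)).
    replace ((H t - H s) ^ 2 * ln x ^ 2 * M ^ 2) with ((Rabs (H t - H s) * Rabs (ln x) * M) ^ 2)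
      by (rewrite !Rpow_mult_distr, !pow2_abs; ring).
    apply pow_incr. split; [apply Rabs_pos |].
    eapply Rle_trans; [apply kerAmp_sub_le; auto |].
    apply Rmult_le_compat_l; [apply Rmult_le_pos; apply Rabs_pos | auto]. }
  pose proof (two_sub_two_cos_bounds (s * x)). pose proof (pow2_ge_0 (kerAmp t x - kerAmp s x)).
  apply Rmult_le_compat; lra.
Qed.

Lemma index_var_pow_le_near t s x hhi e T : 0 < x <= 1 -> H t <= hhi -> H s <= hhi ->
  Rabs s <= T -> 0 < e ->
  rpow0 (index_var_sqr t s x) (alpha / 2) <=
  rpow0 (Rabs ((H t - H s) * (T / e))) alpha * Rpower x (alpha * (1 - e - hhi) - 1).
Proof.
  intros Hx Ht Hs HT He.
  replace (alpha * (1 - e - hhi) - 1) with ((2 - 2 * e - 2 * (/ alpha + hhi)) * (alpha / 2))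
    by (field; lra).
  apply rpow0_le_sqr_Rpower; [lra | lra |]. split; [apply index_var_sqr_ge0 |].
  set (M := Rpower x (- (/ alpha + hhi))).
  assert (HW : 2 - 2 * cos (s * x) <= T ^ 2 * x ^ 2).
  { eapply Rle_trans; [apply two_sub_two_cos_le_sqr |]. rewrite Rpow_mult_distr.
    apply Rmult_le_compat_r; [apply pow2_ge_0 |].
    rewrite <- (pow2_abs s). apply pow_incr. split; [apply Rabs_pos | auto]. }
  eapply Rle_trans;
    [apply (index_var_sqr_le t s x M); [lra | apply Rle_Rpower_le1; lra .. | exact HW] |].
  assert (Hln := sqr_ln_le_le1 x e Hx He).
  replace (2 - 2 * e - 2 * (/ alpha + hhi)) with (- (2 * e) + 2 * - (/ alpha + hhi) + INR 2)
    by (simpl; ring).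
  rewrite !Rpower_plus, Rpower_pow, <- Rpower_pow2 by lra. fold M.
  pose proof (pow2_ge_0 (H t - H s)). pose proof (pow2_ge_0 M). pose proof (pow2_ge_0 T).
  pose proof (pow2_ge_0 x).
  apply Rle_trans with ((H t - H s) ^ 2 * (Rpower x (- (2 * e)) / e ^ 2) * M ^ 2 * (T ^ 2 * x ^ 2)).
  - apply Rmult_le_compat_r; [nra |]. apply Rmult_le_compat_r; [auto |].
    apply Rmult_le_compat_l; auto.
  - apply Req_le. field. lra.
Qed.

Lemma index_var_pow_le_far t s x hlo e : 1 <= x -> hlo <= H t -> hlo <= H s -> 0 < e ->
  rpow0 (index_var_sqr t s x) (alpha / 2) <=
  rpow0 (Rabs ((H t - H s) * (2 / e))) alpha * Rpower x (alpha * (e - hlo) - 1).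
Proof.
  intros Hx Ht Hs He.
  replace (alpha * (e - hlo) - 1) with ((2 * e - 2 * (/ alpha + hlo)) * (alpha / 2))
    by (field; lra).
  apply rpow0_le_sqr_Rpower; [lra | lra |]. split; [apply index_var_sqr_ge0 |].
  set (M := Rpower x (- (/ alpha + hlo))).
  assert (HW : 2 - 2 * cos (s * x) <= 4) by apply two_sub_two_cos_bounds.
  eapply Rle_trans;
    [apply (index_var_sqr_le t s x M); [lra | apply Rle_Rpower; lra .. | exact HW] |].
  assert (Hln := sqr_ln_le_ge1 x e Hx He).
  replace (2 * e - 2 * (/ alpha + hlo)) with (2 * e + 2 * - (/ alpha + hlo)) by ring.
  rewrite Rpower_plus, <- (Rpower_pow2 x (- (/ alpha + hlo))). fold M.
  pose proof (pow2_ge_0 (H t - H s)). pose proof (pow2_ge_0 M).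
  apply Rle_trans with ((H t - H s) ^ 2 * (Rpower x (2 * e) / e ^ 2) * M ^ 2 * 4).
  - apply Rmult_le_compat_r; [lra |]. apply Rmult_le_compat_r; [auto |].
    apply Rmult_le_compat_l; auto.
  - apply Req_le. field. lra.
Qed.

Lemma RInt_index_var_pow_le t s hlo hhi e T a b :
  hlo <= H t <= hhi -> hlo <= H s <= hhi -> 0 < e < hlo -> e + hhi < 1 -> Rabs s <= T ->
  0 < a <= b ->
  RInt (fun x => rpow0 (index_var_sqr t s x) (alpha / 2)) a b <=
  (rpow0 (T / e) alpha / (alpha * (1 - e - hhi)) + rpow0 (2 / e) alpha / (alpha * (hlo - e)))
  * rpow0 (Rabs (H t - H s)) alpha.
Proof.
  intros Ht Hs He Hhi HT Hab.
  assert (Hp : 0 < alpha * (1 - e - hhi)) by (apply Rmult_lt_0_compat; lra).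
  assert (Hq : 0 < alpha * (hlo - e)) by (apply Rmult_lt_0_compat; lra).
  assert (HTe : 0 <= T / e) by (unfold Rdiv; pose proof (Rabs_pos s);
    apply Rmult_le_pos; [lra | left; apply Rinv_0_lt_compat; lra]).
  assert (H2e : 0 <= 2 / e)
    by (unfold Rdiv; apply Rmult_le_pos; [lra | left; apply Rinv_0_lt_compat; lra]).
  rewrite Rmult_plus_distr_r.
  apply (RInt_le_split _ 1); [lra | apply continuous_index_var_pow | | | auto].
  - intros a' b' Hab' Hb'. eapply Rle_trans.
    + apply (RInt_le_Rpower_pos _ a' b' 1 (rpow0 (Rabs ((H t - H s) * (T / e))) alpha)
        (alpha * (1 - e - hhi))); auto using rpow0_ge0.
      * apply continuous_index_var_pow.
      * intros x Hx. apply index_var_pow_le_near; lra.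
    + rewrite Rpower_1_l, Rabs_mult, (Rabs_right (T / e)), rpow0_mult by (lra || apply Rabs_pos).
      apply Req_le. field. lra.
  - intros a' b' Hab'. eapply Rle_trans.
    + apply (RInt_le_Rpower_neg _ a' b' 1 (rpow0 (Rabs ((H t - H s) * (2 / e))) alpha)
        (alpha * (e - hlo))); auto using rpow0_ge0; try lra.
      * apply continuous_index_var_pow.
      * intros x Hx. apply index_var_pow_le_far; lra.
    + rewrite Rpower_1_l, Rabs_mult, (Rabs_right (2 / e)), rpow0_mult by (lra || apply Rabs_pos).
      apply Req_le. field. lra.
Qed.

Lemma index_var_sqr_le_small t s x : 1 <= x -> Rabs (H t - H s) * ln x <= 1 / 10 ->
  index_var_sqr t s x <= 4 / 81 * kerAmp t x ^ 2.
Proof.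
  intros Hx Hsmall. unfold index_var_sqr. set (u := kerAmp t x).
  assert (Hu : 0 < u) by apply Rpower_gt0.
  assert ((u - kerAmp s x) ^ 2 <= u ^ 2 / 81).
  { apply Rsqr_sub_le_of_Rmax; [lra | left; apply Rpower_gt0 |].
    eapply Rle_trans; [apply kerAmp_sub_le; lra |]. fold u.
    assert (0 <= Rmax u (kerAmp s x)) by (eapply Rle_trans; [| apply Rmax_l]; lra).
    assert (0 <= ln x) by (rewrite <- ln_1; apply ln_le; lra).
    rewrite (Rabs_right (ln x)) by lra.
    replace (Rmax u (kerAmp s x) / 10) with (1 / 10 * Rmax u (kerAmp s x)) by field.
    apply Rmult_le_compat_r; lra. }
  pose proof (two_sub_two_cos_bounds (s * x)). pose proof (pow2_ge_0 (u - kerAmp s x)). nra.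
Qed.

Lemma integrand_ge_window t s x : 0 <= H t <= 1 -> 0 < Rabs (t - s) <= 1 ->
  Rabs (H t - H s) * ln (2 / Rabs (t - s)) <= 1 / 10 ->
  / Rabs (t - s) <= x <= 2 / Rabs (t - s) ->
  Rpower (Rabs (t - s)) (alpha * H t) * Rabs (t - s) / 40 <= rhmsp_integrand alpha H t s x.
Proof.
  intros HHt Hh Hsmall Hx. set (h := Rabs (t - s)) in *.
  assert (Hhx : 1 <= h * x <= 2) by (split; [| replace 2 with (h * (2 / h)) by (field; lra)];
    [replace 1 with (h * / h) by (field; lra) |]; apply Rmult_le_compat_l; lra).
  assert (Hx1 : 1 <= x) by nra.
  set (u := kerAmp t x). assert (Hu : 0 < u) by apply Rpower_gt0.
  assert (Hvar : index_var_sqr t s x <= 4 / 81 * u ^ 2).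
  { apply index_var_sqr_le_small; auto. eapply Rle_trans; [| exact Hsmall].
    apply Rmult_le_compat_l; [apply Rabs_pos | apply ln_le; lra]. }
  assert (Hfrozen : 4 / 5 * u ^ 2 <= frozen_sqr t s x).
  { unfold frozen_sqr. fold u.
    assert (4 / 5 <= 2 - 2 * cos ((t - s) * x)).
    { apply two_sub_two_cos_ge. rewrite Rabs_mult, (Rabs_right x) by lra. auto. }
    pose proof (pow2_ge_0 u). nra. }
  pose proof (incr_sqr_ge t s x ltac:(lra)) as Hincr.
  change (rhmsp_integrand alpha H t s x) with (rpow0 (incr_sqr t s x) (alpha / 2)).
  pose proof (pow2_ge_0 u).
  apply Rle_trans with (rpow0 (/ 5 * u ^ 2) (alpha / 2)); [| apply rpow0_le; lra].
  rewrite rpow0_mult, rpow0_pow2, (rpow0_pos u) by lra.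
  unfold u, kerAmp. rewrite Rpower_mult.
  replace (- (/ alpha + H t) * (2 * (alpha / 2))) with (- (1 + alpha * H t)) by (field; lra).
  assert (/ 5 <= rpow0 (/ 5) (alpha / 2)) by (apply rpow0_ge_self; lra).
  assert (Rpower h (alpha * H t) * h / 8 <= Rpower x (- (1 + alpha * H t)))
    by (apply Rpower_window_ge; nra).
  pose proof (Rpower_gt0 h (alpha * H t)). pose proof (Rpower_gt0 x (- (1 + alpha * H t))).
  nra.
Qed.

Lemma RInt_integrand_ge_window t s : 0 <= H t <= 1 -> 0 < Rabs (t - s) <= 1 ->
  Rabs (H t - H s) * ln (2 / Rabs (t - s)) <= 1 / 10 ->
  Rpower (Rabs (t - s)) (alpha * H t) / 40 <=
  RInt (rhmsp_integrand alpha H t s) (/ Rabs (t - s)) (2 / Rabs (t - s)).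
Proof.
  intros HHt Hh Hsmall. set (h := Rabs (t - s)) in *.
  set (m := Rpower h (alpha * H t) * h / 40).
  assert (Hm : RInt (fun _ => m) (/ h) (2 / h) = Rpower h (alpha * H t) / 40).
  { rewrite RInt_const. unfold scal; simpl; unfold mult; simpl. unfold m. field. lra. }
  assert (0 < / h) by (apply Rinv_0_lt_compat; lra).
  rewrite <- Hm. apply RInt_le.
  - unfold Rdiv. lra.
  - apply ex_RInt_const.
  - apply ex_RInt_pos; [intros x Hx; apply continuous_integrand; lra |]. unfold Rdiv. lra.
  - intros x Hx. apply integrand_ge_window; auto. fold h. lra.
Qed.

Lemma rhmsp_integrand_even t s x :
  rhmsp_integrand alpha H t s (- x) = rhmsp_integrand alpha H t s x.
Proof. exact (f_equal (fun y => rpow0 y (alpha / 2)) (incr_sqr_even t s x)). Qed.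

Lemma RInt_integrand_le_uniform hlo hhi e T : 0 < e < hlo -> e + hhi < 1 ->
  exists KA KB, 0 < KA /\ 0 <= KB /\
  forall t s a b, hlo <= H t <= hhi -> hlo <= H s <= hhi -> Rabs s <= T -> t <> s ->
    0 < a <= b -> RInt (rhmsp_integrand alpha H t s) a b <=
    KA * Rpower (Rabs (t - s)) (alpha * H t) + KB * rpow0 (Rabs (H t - H s)) alpha.
Proof.
  intros He Hhi.
  assert (Hp : 0 < / (alpha * (1 - hhi))) by (apply Rinv_0_lt_compat, Rmult_lt_0_compat; lra).
  assert (Hq : 0 < / (alpha * hlo)) by (apply Rinv_0_lt_compat, Rmult_lt_0_compat; lra).
  assert (0 < / (alpha * (1 - e - hhi))) by (apply Rinv_0_lt_compat, Rmult_lt_0_compat; lra).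
  assert (0 < / (alpha * (hlo - e))) by (apply Rinv_0_lt_compat, Rmult_lt_0_compat; lra).
  pose proof (rpow0_ge0 (T / e) alpha). pose proof (rpow0_ge0 (2 / e) alpha).
  exists (4 * (/ (alpha * (1 - hhi)) + 4 / (alpha * hlo))),
    (4 * (rpow0 (T / e) alpha / (alpha * (1 - e - hhi))
          + rpow0 (2 / e) alpha / (alpha * (hlo - e)))).
  unfold Rdiv. split; [lra | split; [nra |]].
  intros t s a b Ht Hs HT Hts Hab.
  pose proof (Rpower_gt0 (Rabs (t - s)) (alpha * H t)).
  assert (/ (alpha * (1 - H t)) + 4 * / (alpha * H t)
          <= / (alpha * (1 - hhi)) + 4 * / (alpha * hlo)).
  { apply Rplus_le_compat; [| apply Rmult_le_compat_l; [lra |]];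
      apply Rinv_le_contravar, Rmult_le_compat_l; try apply Rmult_lt_0_compat; lra. }
  eapply Rle_trans; [apply RInt_integrand_le_terms; auto |].
  pose proof (RInt_frozen_pow_le t s a b ltac:(lra) Hts Hab).
  pose proof (RInt_index_var_pow_le t s hlo hhi e T a b Ht Hs He Hhi HT Hab).
  unfold Rdiv in *. nra.
Qed.

Lemma rhmsp_integral_bounds hlo hhi e T : 0 < e < hlo -> e + hhi < 1 ->
  exists KA KB, 0 < KA /\ 0 <= KB /\
  forall t s, hlo <= H t <= hhi -> hlo <= H s <= hhi -> Rabs s <= T ->
    0 < Rabs (t - s) <= 1 -> Rabs (H t - H s) * ln (2 / Rabs (t - s)) <= 1 / 10 ->
    exists L, ImproperIntegralR (rhmsp_integrand alpha H t s) L /\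
      Rpower (Rabs (t - s)) (alpha * H t) / 20 <= L /\
      L <= KA * Rpower (Rabs (t - s)) (alpha * H t) + KB * rpow0 (Rabs (H t - H s)) alpha.
Proof.
  intros He Hhi.
  destruct (RInt_integrand_le_uniform hlo hhi e T He Hhi) as (KA & KB & HKA & HKB & Hbound).
  exists (2 * KA), (2 * KB). split; [lra | split; [lra |]].
  intros t s Ht Hs HT Hh Hsmall.
  assert (Hts : t <> s) by (intros ->; rewrite Rminus_diag, Rabs_R0 in Hh; lra).
  destruct (ImproperIntegralR_even_bounded _ (continuous_integrand t s) (rhmsp_integrand_even t s)
    (fun x => rpow0_ge0 _ _) _ (fun a b => Hbound t s a b Ht Hs HT Hts)) as (L & HL & HLup & HLlow).
  exists L. split; [auto | split; [| lra]].
  assert (0 < / Rabs (t - s)) by (apply Rinv_0_lt_compat; lra).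
  pose proof (HLlow (/ Rabs (t - s)) (2 / Rabs (t - s)) ltac:(unfold Rdiv; lra)).
  pose proof (RInt_integrand_ge_window t s ltac:(lra) Hh Hsmall). lra.
Qed.

End Kernel.

Lemma rhmsp_incr_norm_diag alpha H s : 0 < alpha <= 2 -> rhmsp_incr_norm alpha H s s 0.
Proof.
  intros Halpha. set (g := rhmsp_integrand alpha H s s).
  assert (Hg0 : forall x, g x = 0).
  { intros x. change (rpow0 (incr_sqr alpha H s s x) (alpha / 2) = 0).
    unfold incr_sqr. rewrite !Rminus_diag, pow_i, Rplus_0_l by apply Nat.lt_0_succ. apply rpow0_0. }
  destruct (ImproperIntegralR_even_bounded g (continuous_integrand alpha H Halpha s s)
    (fun x => eq_trans (Hg0 _) (eq_sym (Hg0 x))) (fun x => rpow0_ge0 _ _) 0)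
    as (L & HL & HL0 & HLint).
  - intros a b _. rewrite (RInt_ext _ (fun _ => 0)), RInt_const by auto.
    unfold scal; simpl; unfold mult; simpl. lra.
  - exists L. split; [auto |].
    assert (HL1 := HLint 1 1 ltac:(lra)).
    assert (RInt g 1 1 = 0) by apply (@RInt_point R_CompleteNormedModule).
    replace L with 0 by lra. symmetry. apply rpow0_0.
Qed.

Lemma Rpower_mul_ln_inv_le h gamma : 0 < h <= 1 -> 0 < gamma ->
  Rpower h gamma * ln (/ h) <= / gamma.
Proof.
  intros Hh Hg. assert (Hih : 1 <= / h) by (rewrite <- Rinv_1; apply Rinv_le_contravar; lra).
  pose proof (ln_le_Rpower_div (/ h) gamma Hih Hg) as Hln. rewrite Rpower_Rinv in Hln by lra.
  pose proof (Rpower_gt0 h gamma).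
  apply Rle_trans with (Rpower h gamma * (Rpower h (- gamma) / gamma));
    [apply Rmult_le_compat_l; lra |].
  rewrite Rpower_Ropp. apply Req_le. field. split; lra.
Qed.

Lemma Rpower_exponent_shift h gamma C alpha a b : 0 < h <= 1 -> 0 < gamma -> 0 < alpha ->
  a <= b <= a + C * Rpower h gamma ->
  Rpower h (alpha * a) <= exp (alpha * C / gamma) * Rpower h (alpha * b).
Proof.
  intros Hh Hg Ha Hab.
  assert (Hln : ln h <= 0) by (rewrite <- ln_1; apply ln_le; lra).
  pose proof (Rpower_mul_ln_inv_le h gamma Hh Hg) as HCg. rewrite ln_Rinv in HCg by lra.
  assert (0 <= C) by (pose proof (Rpower_gt0 h gamma); nra).
  replace (alpha * a) with (- (alpha * (b - a)) + alpha * b) by ring.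
  rewrite Rpower_plus. apply Rmult_le_compat_r; [left; apply Rpower_gt0 |].
  unfold Rpower. apply exp_le.
  replace (- (alpha * (b - a)) * ln h) with (alpha * ((b - a) * - ln h)) by ring.
  replace (alpha * C / gamma) with (alpha * (C * / gamma)) by (field; lra).
  apply Rmult_le_compat_l; [lra |].
  apply Rle_trans with (C * (Rpower h gamma * - ln h)); [nra |].
  apply Rmult_le_compat_l; auto.
Qed.

Lemma Rpower_mul_ln_small C gamma : 0 <= C -> 0 < gamma ->
  exists delta, 0 < delta <= 1 /\
    forall h, 0 < h < delta -> C * Rpower h gamma * ln (2 / h) <= 1 / 10.
Proof.
  intros HC Hg. set (A := C * Rpower 2 (gamma / 2) / (gamma / 2)).
  assert (HA : 0 <= A).
  { unfold A, Rdiv. pose proof (Rpower_gt0 2 (gamma / 2)).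
    apply Rmult_le_pos; [nra | left; apply Rinv_0_lt_compat; lra]. }
  assert (HA1 : 0 < / (10 * A + 1)) by (apply Rinv_0_lt_compat; lra).
  exists (Rmin 1 (Rpower (/ (10 * A + 1)) (2 / gamma))).
  split; [split; [apply Rmin_pos; [lra | apply Rpower_gt0] | apply Rmin_l] |].
  intros h Hh. pose proof (Rmin_l 1 (Rpower (/ (10 * A + 1)) (2 / gamma))).
  pose proof (Rmin_r 1 (Rpower (/ (10 * A + 1)) (2 / gamma))).
  assert (Hhg : Rpower h (gamma / 2) < / (10 * A + 1)).
  { replace (/ (10 * A + 1)) with (Rpower (Rpower (/ (10 * A + 1)) (2 / gamma)) (gamma / 2)).
    - apply Rlt_Rpower_l; lra.
    - rewrite Rpower_mult. replace (2 / gamma * (gamma / 2)) with 1 by (field; lra).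
      apply Rpower_1. auto. }
  assert (Hln : ln (2 / h) <= Rpower (2 / h) (gamma / 2) / (gamma / 2)).
  { apply ln_le_Rpower_div; [| lra]. apply (Rmult_le_reg_l h); [lra |].
    replace (h * (2 / h)) with 2 by (field; lra). lra. }
  assert (Hsplit :
    Rpower (2 / h) (gamma / 2) = Rpower 2 (gamma / 2) * Rpower h (- (gamma / 2))).
  { unfold Rdiv at 1.
    rewrite <- Rpower_Rinv, Rpower_mult_distr by (lra || apply Rinv_0_lt_compat; lra).
    auto. }
  rewrite Hsplit in Hln.
  assert (Hgg : Rpower h gamma * Rpower h (- (gamma / 2)) = Rpower h (gamma / 2))
    by (rewrite <- Rpower_plus; f_equal; field).
  apply Rle_trans with (A * Rpower h (gamma / 2)).
  - pose proof (Rpower_gt0 h gamma). rewrite <- Hgg. unfold A.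
    replace (C * Rpower 2 (gamma / 2) / (gamma / 2) * (Rpower h gamma * Rpower h (- (gamma / 2))))
      with (C * Rpower h gamma * (Rpower 2 (gamma / 2) * Rpower h (- (gamma / 2)) / (gamma / 2)))
      by (field; lra).
    apply Rmult_le_compat_l; [nra | auto].
  - apply Rle_trans with (A * / (10 * A + 1)); [apply Rmult_le_compat_l; lra |].
    apply (Rmult_le_reg_r (10 * A + 1)); [lra |].
    field_simplify; lra.
Qed.

Lemma rpow0_root_mult_Rpower c h q alpha : 0 < alpha -> 0 <= c -> 0 < h ->
  rpow0 (c * Rpower h (alpha * q)) (/ alpha) = rpow0 c (/ alpha) * rpow0 h q.
Proof.
  intros Ha Hc Hh. rewrite rpow0_mult by (lra || left; apply Rpower_gt0).
  rewrite (rpow0_pos (Rpower h _)), (rpow0_pos h), Rpower_mult by (auto || apply Rpower_gt0).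
  replace (alpha * q * / alpha) with q by (field; lra). auto.
Qed.

Lemma rpow0_hoelder_le d C h gamma a alpha : 0 < h <= 1 -> 0 < alpha -> a <= gamma ->
  Rabs d <= C * Rpower h gamma -> rpow0 (Rabs d) alpha <= rpow0 C alpha * Rpower h (alpha * a).
Proof.
  intros Hh Ha Hag Hd.
  assert (0 <= C) by (pose proof (Rabs_pos d); pose proof (Rpower_gt0 h gamma); nra).
  apply Rle_trans with (rpow0 (C * Rpower h gamma) alpha).
  { apply rpow0_le; [lra | split; [apply Rabs_pos | exact Hd]]. }
  rewrite rpow0_mult, (rpow0_pos (Rpower h gamma)), Rpower_mult
    by (auto || apply Rpower_gt0 || (left; apply Rpower_gt0)).
  apply Rmult_le_compat_l; [apply rpow0_ge0 |]. apply Rle_Rpower_le1; [lra | nra].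
Qed.

Section LocalIncrement.

Variables (alpha : R) (H : R -> R) (T hlo hhi C gamma : R).
Hypothesis Halpha : 0 < alpha <= 2.
Hypothesis Hhlo : 0 < hlo.
Hypothesis Hhhi : hhi < 1.
Hypothesis H_bounds : forall t, 0 <= t -> hlo <= H t <= hhi.
Hypothesis H_le_gamma : forall t, 0 <= t -> H t <= gamma.
Hypothesis HC : 0 < C.
Hypothesis H_hoelder : forall t s, 0 <= t -> 0 <= s ->
  Rabs (H t - H s) <= C * Rpower (Rabs (t - s)) gamma.

Lemma gamma_pos : 0 < gamma.
Proof. pose proof (H_le_gamma 0 (Rle_refl 0)). pose proof (H_bounds 0 (Rle_refl 0)). lra. Qed.

Lemma hoelder_between t s u : 0 <= t -> 0 <= s -> t <> s -> Rmin s t <= u <= Rmax s t ->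
  Rabs (H u - H t) <= C * Rpower (Rabs (t - s)) gamma.
Proof.
  intros Ht Hs Hts Hu. pose proof gamma_pos.
  assert (Hmin : Rmin s t <= t) by apply Rmin_r. assert (0 <= Rmin s t) by (apply Rmin_glb; lra).
  destruct (Req_dec u t) as [-> | Hut].
  - rewrite Rminus_diag, Rabs_R0. pose proof (Rpower_gt0 (Rabs (t - s)) gamma). nra.
  - eapply Rle_trans; [apply H_hoelder; lra |]. apply Rmult_le_compat_l; [lra |].
    apply Rle_Rpower_l; [lra | split; [apply Rabs_pos_lt; lra |]].
    unfold Rmin, Rmax in Hu. unfold Rabs. repeat destruct Rcase_abs; destruct Rle_dec in Hu; lra.
Qed.

(* The price of replacing [H t] by the extreme values of [H] between [s] and [t]. *)
Lemma hurst_exponent_window t s u w : 0 <= t -> 0 <= s -> 0 < Rabs (t - s) < 1 ->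
  Rmin s t <= u <= Rmax s t -> Rmin s t <= w <= Rmax s t -> H u <= H t <= H w ->
  Rpower (Rabs (t - s)) (alpha * H u)
    <= exp (alpha * C / gamma) * Rpower (Rabs (t - s)) (alpha * H t) /\
  Rpower (Rabs (t - s)) (alpha * H t)
    <= exp (alpha * C / gamma) * Rpower (Rabs (t - s)) (alpha * H w) /\
  rpow0 (Rabs (H t - H s)) alpha <= rpow0 C alpha * Rpower (Rabs (t - s)) (alpha * H w).
Proof.
  intros Ht Hs Hh Hu Hw Huw. pose proof gamma_pos.
  assert (Hts : t <> s) by (intros ->; rewrite Rminus_diag, Rabs_R0 in Hh; lra).
  pose proof (hoelder_between t s u Ht Hs Hts Hu) as Hu_hol.
  pose proof (hoelder_between t s w Ht Hs Hts Hw) as Hw_hol.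
  apply Rabs_le_between in Hu_hol, Hw_hol.
  assert (Hw0 : 0 <= w) by (pose proof (Rmin_glb s t 0); lra).
  split; [| split].
  - apply Rpower_exponent_shift; auto; lra.
  - apply Rpower_exponent_shift; auto; lra.
  - apply (rpow0_hoelder_le _ _ _ gamma); [lra | lra | apply H_le_gamma; lra |].
    apply H_hoelder; lra.
Qed.

Lemma rhmsp_integral_local : exists delta KL KU, 0 < delta /\ 0 < KL /\ 0 < KU /\
  forall t s u w, 0 <= t <= T -> 0 <= s <= T -> 0 < Rabs (t - s) < delta ->
    Rmin s t <= u <= Rmax s t -> Rmin s t <= w <= Rmax s t -> H u <= H t <= H w ->
    exists L, ImproperIntegralR (rhmsp_integrand alpha H t s) L /\
      KL * Rpower (Rabs (t - s)) (alpha * H u) <= L <=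
      KU * Rpower (Rabs (t - s)) (alpha * H w).
Proof.
  pose proof gamma_pos.
  set (e := Rmin hlo (1 - hhi) / 2).
  assert (He : 0 < e < hlo /\ e + hhi < 1) by (unfold e, Rmin; destruct Rle_dec; lra).
  destruct (rhmsp_integral_bounds alpha H Halpha hlo hhi e T) as (KA & KB & HKA & HKB & Hint);
    try tauto.
  destruct (Rpower_mul_ln_small C gamma) as (delta & Hdelta & Hsmall); try lra.
  set (E := exp (alpha * C / gamma)). assert (HE : 0 < E) by apply exp_pos.
  exists delta, (/ (20 * E)), (KA * E + KB * rpow0 C alpha).
  split; [lra | split; [apply Rinv_0_lt_compat; lra |]].
  split; [pose proof (rpow0_ge0 C alpha); nra |].
  intros t s u w Ht Hs Hh Hu Hw Huw. set (h := Rabs (t - s)) in *.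
  destruct (hurst_exponent_window t s u w ltac:(lra) ltac:(lra) ltac:(fold h; lra) Hu Hw Huw)
    as (Hlow & Hup & HD). fold h in Hlow, Hup, HD. fold E in Hlow, Hup.
  assert (Hts_small : Rabs (H t - H s) * ln (2 / h) <= 1 / 10).
  { eapply Rle_trans; [| apply (Hsmall h); lra]. apply Rmult_le_compat_r.
    - rewrite <- ln_1. apply ln_le; [lra |]. apply (Rmult_le_reg_l h); [lra |].
      replace (h * (2 / h)) with 2 by (field; lra). lra.
    - apply H_hoelder; lra. }
  destruct (Hint t s (H_bounds t ltac:(lra)) (H_bounds s ltac:(lra)) ltac:(apply Rabs_le; lra)
    ltac:(fold h; lra) Hts_small) as (L & HL & HLlo & HLhi).
  fold h in HLlo, HLhi. exists L. split; [auto | split].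
  - apply Rle_trans with (/ (20 * E) * (E * Rpower h (alpha * H t))).
    + apply Rmult_le_compat_l; [left; apply Rinv_0_lt_compat |]; lra.
    + replace (/ (20 * E) * (E * Rpower h (alpha * H t))) with (Rpower h (alpha * H t) / 20)
        by (field; lra). auto.
  - pose proof (Rmult_le_compat_l KA _ _ (Rlt_le _ _ HKA) Hup).
    pose proof (Rmult_le_compat_l KB _ _ HKB HD). lra.
Qed.

End LocalIncrement.

Theorem mainTheorem3 (alpha : R) (H : R -> R) (T : R)
  (halpha : 1 < alpha < 2)
  (hHbounds : exists hlo hhi, 0 < hlo /\ hhi < 1 /\
                forall t, 0 <= t -> hlo <= H t <= hhi)
  (hHolder : exists C gamma, 0 < C /\
               (exists m, m < gamma /\ forall t, 0 <= t -> H t <= m) /\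
               forall t s, 0 <= t -> 0 <= s ->
                 Rabs (H t - H s) <= C * Rpower (Rabs (t - s)) gamma)
  (hT : 0 < T) :
  exists delta C1 C2, 0 < delta /\ 0 < C1 /\ 0 < C2 /\
    forall t s, 0 <= t <= T -> 0 <= s <= T -> Rabs (t - s) < delta ->
      forall hmin hmax,
        IsMinOn H (Rmin s t) (Rmax s t) hmin ->
        IsMaxOn H (Rmin s t) (Rmax s t) hmax ->
        exists N, rhmsp_incr_norm alpha H t s N /\
          C1 * rpow0 (Rabs (t - s)) hmin <= N /\
          N <= C2 * rpow0 (Rabs (t - s)) hmax.
Proof.
  destruct hHbounds as (hlo & hhi & Hlo & Hhi & HHb).
  destruct hHolder as (C & gamma & HC & (m & Hmg & Hm) & Hhol).
  assert (Halpha : 0 < alpha <= 2) by lra.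
  assert (HHg : forall t, 0 <= t -> H t <= gamma) by (intros t Ht; pose proof (Hm t Ht); lra).
  destruct (rhmsp_integral_local alpha H T hlo hhi C gamma Halpha Hlo Hhi HHb HHg HC Hhol)
    as (delta & KL & KU & Hdelta & HKL & HKU & Hloc).
  exists delta, (rpow0 KL (/ alpha)), (rpow0 KU (/ alpha)).
  split; [| split; [| split]]; auto using rpow0_gt0.
  intros t s Ht Hs Hts hmin hmax [(u & Hu & <-) Hmin] [(w & Hw & <-) Hmax].
  destruct (Req_dec t s) as [<- | Hne].
  { exists 0. split; [apply rhmsp_incr_norm_diag; lra |].
    rewrite Rminus_diag, Rabs_R0, !rpow0_0. lra. }
  assert (Hh : 0 < Rabs (t - s)) by (apply Rabs_pos_lt; lra).
  assert (Htst : Rmin s t <= t <= Rmax s t) by (split; [apply Rmin_r | apply Rmax_r]).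
  destruct (Hloc t s u w Ht Hs ltac:(lra) Hu Hw (conj (Hmin t Htst) (Hmax t Htst)))
    as (L & HL & HLlo & HLhi).
  exists (rpow0 L (/ alpha)). split; [exists L; auto |].
  rewrite <- !rpow0_root_mult_Rpower by lra.
  pose proof (Rpower_gt0 (Rabs (t - s)) (alpha * H u)).
  split; apply rpow0_le; try (left; apply Rinv_0_lt_compat; lra); split; nra.
Qed.
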